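(* For every $n\ge1$, ${\rm gp}_{\rm t}(S_3^n)={\rm gp}_{\rm d}(S_3^n)=3$, and $\#{\rm gp}_{\rm t}(S_3^n)=\#{\rm gp}_{\rm d}(S_3^n)=1$.
   Context: For $p\ge3$, $n\ge1$, the Sierpiński graph $S_p^n$ has vertex set $\{0,1,\dots,p-1\}^n$, a vertex written $i_1\cdots i_n$; vertices $i_1\cdots i_n$ and $j_1\cdots j_n$ are adjacent iff there is $h$ with $i_t=j_t$ for $t<h$, $i_h\ne j_h$, and $i_t=j_h$, $j_t=i_h$ for $t>h$. For $X\subseteq V(G)$, $u,v$ are $X$-positionable if every shortest $u,v$-path $P$ has $V(P)\cap X\subseteq\{u,v\}$. $X$ is a dual general position set if every two vertices of $X$ are $X$-positionable and every two vertices of $V(G)\setminus X$ are $X$-positionable; a total general position set if every two vertices of $G$ are $X$-positionable. ${\rm gp}_{\rm d},{\rm gp}_{\rm t}$ are the maximum sizes and $\#{\rm gp}_{\rm d},\#{\rm gp}_{\rm t}$ the numbers of sets attaining them. *)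

From mathcomp Require Import all_boot.
From mathcomp Require Import boolp.
Set Implicit Arguments. Unset Strict Implicit. Unset Printing Implicit Defensive.

(* Sierpinski graph S_p^n : vertices are words i_1 ... i_n over {0,...,p-1},
   represented as finite functions 'I_n -> 'I_p (index t : 'I_n is position t+1). *)
Definition sierp_vertex (p n : nat) := {ffun 'I_n -> 'I_p}.

Definition sierp_adj (p n : nat) : rel (sierp_vertex p n) :=
  fun u v =>
    [exists h : 'I_n,
      (u h != v h) &&
      [forall t : 'I_n,
         ((t < h)%N ==> (u t == v t)) &&
         ((h < t)%N ==> ((u t == v h) && (v t == u h)))]].

Section GP.
Variables (T : finType) (e : rel T).

(* x :: s is a u,v-walk; a shortest u,v-path is a u,v-walk of minimum length
   (any minimum-length walk is a path). *)
Definition is_walk (u v : T) (s : seq T) : Prop := path e u s /\ last u s = v.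

Definition shortest_path (u v : T) (s : seq T) : Prop :=
  is_walk u v s /\ forall s', is_walk u v s' -> (size s <= size s')%N.

Definition positionable (X : {set T}) (u v : T) : Prop :=
  forall s, shortest_path u v s ->
    forall w, w \in u :: s -> w \in X -> w = u \/ w = v.

Definition dual_gp_set (X : {set T}) : Prop :=
  (forall u v, u \in X -> v \in X -> u != v -> positionable X u v) /\
  (forall u v, u \notin X -> v \notin X -> u != v -> positionable X u v).

Definition total_gp_set (X : {set T}) : Prop :=
  forall u v, u != v -> positionable X u v.

Definition gp_d : nat := \max_(X : {set T} | `[< dual_gp_set X >]) #|X|.
Definition gp_t : nat := \max_(X : {set T} | `[< total_gp_set X >]) #|X|.

Definition num_gp_d : nat :=
  #|[set X : {set T} | `[< dual_gp_set X >] && (#|X| == gp_d)]|.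
Definition num_gp_t : nat :=
  #|[set X : {set T} | `[< total_gp_set X >] && (#|X| == gp_t)]|.
End GP.

From mathcomp Require Import all_boot.
From mathcomp Require Import boolp.
Set Implicit Arguments. Unset Strict Implicit. Unset Printing Implicit Defensive.

(* The extreme vertices i...i of S_3^n are simplicial (their two neighbours are
   adjacent), so they never lie inside a geodesic, and the three of them form a
   total, hence dual, general position set.  Conversely, in a dual general
   position set X a vertex of X in the middle of a geodesic of length 2
   separates its ends (one lies in X, the other does not), and no vertex of X
   lies inside a geodesic of length 3 whose ends are both outside X.  Let
   x in X be non-extreme and c its neighbour across the bridge edge at the last
   level where the letters of x change.  If c is in X, the triangle neighbours
   a of x and a' of c lie outside X and a-x-c-a' is a geodesic.  If c is not in
   X, the whole last-level triangle of x lies in X; two of its vertices u1, u2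
   carry bridge edges at the penultimate level, whose far ends d1, d2 lie
   outside X, and d1-u1-u2-d2 is a geodesic.  So every dual general position
   set consists of extreme vertices. *)

Section GeneralPosition.
Variables (T : finType) (e : rel T).

Lemma total_gp_dual (X : {set T}) : total_gp_set e X -> dual_gp_set e X.
Proof. by move=> tX; split=> u v _ _; apply: tX. Qed.

Definition simplicial (w : T) : Prop :=
  forall a b, e a w -> e w b -> a = b \/ e a b.

Lemma simplicial_total_gp (X : {set T}) :
  {in X, forall w, simplicial w} -> total_gp_set e X.
Proof.
move=> simplX u v _ s [[pth lst] smin] w.
rewrite in_cons => /predU1P[-> _|ws wX]; first by left.
have [-> |wv] := eqVneq w v; first by right.
exfalso; case/splitPr: ws pth lst smin => s1 [|z s2].
  by rewrite last_cat => _ /= wv'; rewrite wv' eqxx in wv.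
rewrite cat_path last_cat /= => /and3P[pth1 e_w /andP[e_wz pth2]] lst smin.
have shorter s' : path e u s' -> last u s' = v ->
    (size s' < size (s1 ++ w :: z :: s2))%N -> False.
  by move=> p' l'; rewrite ltnNge smin.
rewrite size_cat /= in shorter.
case: (simplX w wX _ _ e_w e_wz) => [eq_z | e_z].
  apply: (shorter (s1 ++ s2)); rewrite ?cat_path ?last_cat ?size_cat ?pth1 ?eq_z //.
  by rewrite ltn_add2l ltnW.
apply: (shorter (s1 ++ z :: s2)); rewrite ?cat_path ?last_cat ?size_cat //= ?pth1 ?e_z //.
by rewrite ltn_add2l.
Qed.

Definition dist_ge3 (u v : T) : Prop :=
  [/\ u != v, ~~ e u v & forall z, ~~ (e u z && e z v)].

Lemma dual_gp_positionable (X : {set T}) u v :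
  dual_gp_set e X -> (u \in X) = (v \in X) -> u != v -> positionable e X u v.
Proof.
case=> inX outX eqX uv; case uX: (u \in X).
  by apply: inX; rewrite // -eqX.
by apply: outX; rewrite // -?eqX uX.
Qed.

Hypotheses (e_sym : symmetric e) (e_irr : irreflexive e).

Lemma dual_gp_geodesic2 (X : {set T}) x a b :
  dual_gp_set e X -> x \in X -> e x a -> e x b -> a != b -> ~~ e a b ->
  (a \in X) != (b \in X).
Proof.
move=> dX xX xa xb ab nab; apply/negP => /eqP eqX.
have short : shortest_path e a b [:: x; b].
  split; first by split; rewrite //= e_sym xa xb.
  case=> [|y [|z s]] [] //=.
    by move=> _ ab'; rewrite ab' eqxx in ab.
  by rewrite andbT => ay yb; rewrite -yb ay in nab.
case: (dual_gp_positionable dX eqX ab short (w := x)) => //; first by rewrite !inE eqxx orbT.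
  by move=> xa'; rewrite xa' e_irr in xa.
by move=> xb'; rewrite xb' e_irr in xb.
Qed.

Lemma dual_gp_geodesic3 (X : {set T}) a x y b :
  dual_gp_set e X -> x \in X -> e a x -> e x y -> e y b -> dist_ge3 a b ->
  (a \in X) || (b \in X).
Proof.
move=> dX xX ax xy yb [ab nab nz]; apply/negPn/negP; rewrite negb_or => /andP[aX bX].
have short : shortest_path e a b [:: x; y; b].
  split; first by split; rewrite //= ax xy yb.
  case=> [|z [|z' [|z'' s]]] [] //=.
  - by move=> _ ab'; rewrite ab' eqxx in ab.
  - by rewrite andbT => az zb; rewrite -zb az in nab.
  - by rewrite andbT => /andP[az zb] zb'; have := nz z; rewrite az -zb' zb.
have eqX : (a \in X) = (b \in X) by rewrite (negbTE aX) (negbTE bX).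
case: (dual_gp_positionable dX eqX ab short (w := x)) => //; first by rewrite !inE eqxx orbT.
  by move=> xa; rewrite -xa e_irr in ax.
by move=> xb; rewrite -xb ax in nab.
Qed.

End GeneralPosition.

Lemma greatest_set_max_card (T : finType) (P : {set T} -> Prop) (E : {set T}) :
  P E -> (forall X, P X -> X \subset E) ->
  \max_(X : {set T} | `[< P X >]) #|X| = #|E| /\
  #|[set X : {set T} |
      `[< P X >] && (#|X| == \max_(X : {set T} | `[< P X >]) #|X|)]| = 1.
Proof.
move=> PE maxE.
have max_eq : \max_(X : {set T} | `[< P X >]) #|X| = #|E|.
  apply/eqP; rewrite eqn_leq andbC.
  rewrite (leq_bigmax_cond (F := fun X : {set T} => #|X|)) ?asboolT //=.
  by apply/bigmax_leqP => X /asboolP /maxE /subset_leq_card.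
split=> //; rewrite max_eq -(cards1 E).
congr #|pred_of_set _|; apply/setP => X; rewrite !inE.
apply/andP/eqP => [[/asboolP /maxE sXE /eqP cardX] | ->].
  by apply/eqP; rewrite eqEcard sXE cardX /=.
by split; [exact: asboolT|].
Qed.

Lemma ord_avoid2 m (i j : 'I_m) : (2 < m)%N -> exists k : 'I_m, k != i /\ k != j.
Proof.
move=> m_gt2; have [k] : exists k, k \in ~: [set i; j].
  apply/card_gt0P; rewrite cardsCs setCK card_ord subn_gt0.
  by rewrite (leq_ltn_trans _ m_gt2) // cards2; case: (i != j).
by rewrite !inE negb_or => /andP[]; exists k.
Qed.

Section SierpinskiAdjacency.
Variables p n : nat.
Local Notation vertex := (sierp_vertex p n).

Definition first_diff (u v : vertex) (h : 'I_n) : Prop :=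
  u h != v h /\ forall t : 'I_n, (t < h)%N -> u t = v t.

Lemma sierp_adjP (u v : vertex) :
  reflect (exists h, first_diff u v h /\
             forall t : 'I_n, (h < t)%N -> u t = v h /\ v t = u h)
          (sierp_adj u v).
Proof.
apply: (iffP existsP) => [[h /andP[uvh /forallP uvt]] | [h [[uvh below] above]]].
  exists h; split; [split=> // t lt_th | move=> t lt_ht];
    have /andP[/implyP bl /implyP ab] := uvt t.
    exact/eqP/bl.
  by have /andP[/eqP -> /eqP ->] := ab lt_ht.
exists h; rewrite uvh; apply/forallP => t; apply/andP; split; apply/implyP => lt.
  by rewrite below.
by have [-> ->] := above t lt; rewrite !eqxx.
Qed.

Lemma first_diff_inj (u v : vertex) h h' :
  first_diff u v h -> first_diff u v h' -> h = h'.
Proof.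
move=> [uvh below] [uvh' below']; apply: val_inj; apply/eqP; rewrite eqn_leq.
apply/andP; split; rewrite leqNgt; apply/negP => lt.
  by rewrite below // eqxx in uvh'.
by rewrite below' // eqxx in uvh.
Qed.

Lemma first_diff_sym (u v : vertex) h : first_diff u v h -> first_diff v u h.
Proof. by case=> uvh below; split=> [|t /below ->]; rewrite // eq_sym. Qed.

Lemma sierp_adj_above (u v : vertex) h :
  sierp_adj u v -> first_diff u v h ->
  forall t : 'I_n, (h < t)%N -> u t = v h /\ v t = u h.
Proof. by case/sierp_adjP=> h' [d' above] d; rewrite (first_diff_inj d d'). Qed.

Lemma sierp_adj_sym : symmetric (@sierp_adj p n).
Proof.
apply: symmetric_from_pre => u v /sierp_adjP[h [d above]]; apply/sierp_adjP.
by exists h; split=> [|t /above[]]; [exact: first_diff_sym | split].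
Qed.

Lemma sierp_adj_irr : irreflexive (@sierp_adj p n).
Proof. by move=> u; apply/negbTE/negP => /sierp_adjP[h [[]]]; rewrite eqxx. Qed.

Lemma sierp_dist_ge3 (u v : vertex) h (t1 t2 : 'I_n) :
  first_diff u v h -> (h < t1)%N -> u t1 != v h -> (h < t2)%N -> v t2 != u h ->
  dist_ge3 (@sierp_adj p n) u v.
Proof.
move=> d ht1 ut1 ht2 vt2; have [uvh below] := d; split.
- by apply: contraNneq uvh => ->.
- by apply/negP => uv; have [uvt1 _] := sierp_adj_above uv d ht1; rewrite uvt1 eqxx in ut1.
move=> z; apply/negP => /andP[uz zv]; rewrite sierp_adj_sym in uz.
have /sierp_adjP[k [[zuk zu_below] zu_above]] := uz.
have [kh|hk|kh] := ltngtP k h.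
- have dzv : first_diff z v k.
    by split=> [|t tk]; [rewrite -below | rewrite zu_below ?below // (ltn_trans tk kh)].
  have [_ vh] := sierp_adj_above zv dzv kh; have [_ uh] := zu_above h kh.
  by rewrite vh -uh eqxx in uvh.
- have dzv : first_diff z v h.
    by split=> [|t th]; [rewrite zu_below | rewrite zu_below ?below // (ltn_trans th hk)].
  have [_ vt] := sierp_adj_above zv dzv ht2.
  by rewrite vt zu_below ?eqxx in vt2.
have {}kh : k = h by exact: val_inj.
subst k.
have [zvh|zvh] := eqVneq (z h) (v h).
  by have [_ ut] := zu_above t1 ht1; rewrite ut zvh eqxx in ut1.
have dzv : first_diff z v h by split=> // t th; rewrite zu_below ?below.
have [zt _] := sierp_adj_above zv dzv ht1; have [zt' _] := zu_above t1 ht1.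
by rewrite -zt zt' eqxx in uvh.
Qed.

End SierpinskiAdjacency.

Section LastCoordinate.
Variables p n : nat.
Local Notation vertex := (sierp_vertex p n.+1).
Local Notation L := (@ord_max n).

Definition extreme_vertices : {set vertex} := [set v : vertex | [forall t, v t == v L]].

Definition set_last (v : vertex) (i : 'I_p) : vertex :=
  [ffun t => if t == L then i else v t].

Lemma set_last_max (v : vertex) i : set_last v i L = i.
Proof. by rewrite ffunE eqxx. Qed.

Lemma set_last_other (v : vertex) i t : t != L -> set_last v i t = v t.
Proof. by rewrite ffunE => /negbTE ->. Qed.

Lemma set_last_id (v : vertex) : set_last v (v L) = v.
Proof. by apply/ffunP => t; rewrite ffunE; case: eqP => [->|]. Qed.

Lemma set_lastK (v : vertex) i j : set_last (set_last v i) j = set_last v j.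
Proof. by apply/ffunP => t; rewrite !ffunE; case: eqP. Qed.

Lemma ltn_ord_max (t : 'I_n.+1) : t != L -> (t < n)%N.
Proof. by rewrite -(inj_eq val_inj) /= => tn; rewrite ltn_neqAle tn -ltnS ltn_ord. Qed.

Lemma ltn_neq_ord_max (t h : 'I_n.+1) : (t < h)%N -> t != L.
Proof. by move=> th; apply: contraTneq th => ->; rewrite -leqNgt -ltnS ltn_ord. Qed.

Lemma sierp_adj_last (u v : vertex) :
  (forall t, t != L -> u t = v t) -> u L != v L -> sierp_adj u v.
Proof.
move=> agree uvL; apply/sierp_adjP; exists L; split.
  by split=> // t /ltn_neq_ord_max; apply: agree.
by move=> t; rewrite ltnNge -ltnS ltn_ord.
Qed.

Lemma sierp_adj_set_last (v : vertex) i : i != v L -> sierp_adj v (set_last v i).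
Proof.
move=> iv; apply: sierp_adj_last => [t tL|]; first by rewrite set_last_other.
by rewrite set_last_max eq_sym.
Qed.

Lemma extreme_nbr (w z : vertex) : w \in extreme_vertices -> sierp_adj w z ->
  forall t, t != L -> z t = w t.
Proof.
rewrite inE => /forallP const /sierp_adjP[h [[wzh below] above]] t tL.
have [hL|hL] := eqVneq h L.
  by rewrite below // hL ltn_ord_max.
by have [wL _] := above L (ltn_ord_max hL); rewrite (eqP (const h)) wL eqxx in wzh.
Qed.

Lemma extreme_simplicial (w : vertex) :
  w \in extreme_vertices -> simplicial (@sierp_adj p n.+1) w.
Proof.
move=> wE a b aw wb; rewrite sierp_adj_sym in aw.
have agree t : t != L -> a t = b t.
  by move=> tL; rewrite (extreme_nbr wE aw tL) (extreme_nbr wE wb tL).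
have [abL|abL] := eqVneq (a L) (b L); [left | right; exact: sierp_adj_last].
by apply/ffunP => t; have [->|/agree] := eqVneq t L.
Qed.

Lemma extreme_total_gp : total_gp_set (@sierp_adj p n.+1) extreme_vertices.
Proof. by apply: simplicial_total_gp => w; apply: extreme_simplicial. Qed.

Lemma card_extreme : #|extreme_vertices| = p.
Proof.
have -> : extreme_vertices = [set [ffun=> i] | i : 'I_p].
  apply/setP => v; rewrite inE; apply/forallP/imsetP => [const | [i _ ->] t].
    by exists (v L) => //; apply/ffunP => t; rewrite ffunE; apply/eqP.
  by rewrite !ffunE.
by rewrite card_imset ?card_ord // => i j /ffunP /(_ L); rewrite !ffunE.
Qed.

Lemma nonextreme_last_change (x : vertex) : x \notin extreme_vertices ->
  exists h : 'I_n.+1, x h != x L /\ forall t : 'I_n.+1, (h < t)%N -> x t = x L.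
Proof.
rewrite inE negb_forall => /existsP[t0 xt0].
pose P k := (k < n.+1)%N && (x (inord k) != x L).
have exP : exists k, P k by exists t0; rewrite /P ltn_ord inord_val.
have ubP k : P k -> (k <= n)%N by case/andP.
case: (ex_maxnP exP ubP) => k /andP[kn xk] kmax.
have hk : (inord k : 'I_n.+1) = k :> nat by rewrite inordK.
exists (inord k); split=> // t; rewrite hk => kt; apply/eqP; apply: contraTT kt => xt.
by rewrite -leqNgt kmax // /P ltn_ord inord_val.
Qed.

(* For x = w a b...b with the letter a at position h, this is w b a...a. *)
Definition bridge_nbr (x : vertex) (h : 'I_n.+1) : vertex :=
  [ffun t : 'I_n.+1 => if (t < h)%N then x t else if t == h then x L else x h].

Lemma bridge_nbr_below (x : vertex) (h t : 'I_n.+1) :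
  (t < h)%N -> bridge_nbr x h t = x t.
Proof. by rewrite ffunE => ->. Qed.

Lemma bridge_nbr_at (x : vertex) h : bridge_nbr x h h = x L.
Proof. by rewrite ffunE ltnn eqxx. Qed.

Lemma first_diff_bridge_nbr (x : vertex) h :
  x h != x L -> first_diff x (bridge_nbr x h) h.
Proof. by move=> xh; split=> [|t th]; rewrite ?bridge_nbr_at ?bridge_nbr_below. Qed.

Lemma bridge_nbr_max (x : vertex) h : h != L -> bridge_nbr x h L = x h.
Proof.
move=> hL; rewrite ffunE eq_sym (negbTE hL) ltnNge ltnW //.
exact: ltn_ord_max.
Qed.

Lemma sierp_adj_bridge_nbr (x : vertex) h : x h != x L ->
  (forall t : 'I_n.+1, (h < t)%N -> x t = x L) -> sierp_adj x (bridge_nbr x h).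
Proof.
move=> xh above; apply/sierp_adjP; exists h; split; first exact: first_diff_bridge_nbr.
move=> t ht; have th : (t == h) = false := gtn_eqF ht.
by rewrite !ffunE ltnn eqxx ltnNge (ltnW ht) th above.
Qed.

Lemma nadj_set_last_bridge (u w : vertex) h i :
  h != L -> sierp_adj u w -> first_diff u w h -> i != u L ->
  ~~ sierp_adj (set_last u i) w.
Proof.
move=> hL uw [uwh below] iu; apply/negP => bw.
have hn : (h < L)%N := ltn_ord_max hL.
have dbw : first_diff (set_last u i) w h.
  split=> [|t th]; first by rewrite set_last_other.
  by rewrite set_last_other ?below // (ltn_neq_ord_max th).
have [uL _] := sierp_adj_above uw (conj uwh below) hn.
have [bL _] := sierp_adj_above bw dbw hn.
by rewrite set_last_max in bL; rewrite bL uL eqxx in iu.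
Qed.

End LastCoordinate.

Section DualSierpinski3.
Variable n : nat.
Local Notation vertex := (sierp_vertex 3 n.+1).
Local Notation L := (@ord_max n).
Variable X : {set vertex}.
Hypothesis dX : dual_gp_set (@sierp_adj 3 n.+1) X.

Lemma dual_gp_bridge_split (u d : vertex) h i :
  u \in X -> sierp_adj u d -> first_diff u d h -> h != L -> i != u L ->
  (set_last u i \in X) != (d \in X).
Proof.
move=> uX ud dh hL iu.
have ad : set_last u i != d.
  by case: dh => uh _; apply: contraNneq uh => <-; rewrite set_last_other.
exact: (dual_gp_geodesic2 (@sierp_adj_sym 3 n.+1) (@sierp_adj_irr 3 n.+1) dX uX
  (sierp_adj_set_last iu) ud ad (nadj_set_last_bridge hL ud dh iu)).
Qed.

Lemma dual_gp_no_bridge_edge (x c : vertex) h :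
  x \in X -> c \in X -> sierp_adj x c -> first_diff x c h -> h != L -> False.
Proof.
move=> xX cX xc dxc hL.
have hn : (h < L)%N := ltn_ord_max hL.
have [xL cL] := sierp_adj_above xc dxc hn.
have [m [mx _]] := ord_avoid2 (x L) (x L) isT.
have [m' [mc _]] := ord_avoid2 (c L) (c L) isT.
have cx : sierp_adj c x by rewrite sierp_adj_sym.
have aX : set_last x m \notin X.
  by have := dual_gp_bridge_split xX xc dxc hL mx; rewrite cX eqb_id.
have a'X : set_last c m' \notin X.
  by have := dual_gp_bridge_split cX cx (first_diff_sym dxc) hL mc; rewrite xX eqb_id.
have far : dist_ge3 (@sierp_adj 3 n.+1) (set_last x m) (set_last c m').
  have [xch below] := dxc; apply: (sierp_dist_ge3 _ hn _ hn).
  - split=> [|t th]; first by rewrite !set_last_other.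
    by rewrite !set_last_other ?below // (ltn_neq_ord_max th).
  - by rewrite set_last_max set_last_other // -xL.
  - by rewrite set_last_max set_last_other // -cL.
have ax : sierp_adj (set_last x m) x by rewrite sierp_adj_sym sierp_adj_set_last.
have ca' : sierp_adj c (set_last c m') := sierp_adj_set_last mc.
have := dual_gp_geodesic3 (@sierp_adj_irr 3 n.+1) dX xX ax xc ca' far.
by rewrite (negbTE aX) (negbTE a'X).
Qed.

End DualSierpinski3.

Lemma dual_gp_no_full_triangle n (X : {set sierp_vertex 3 n.+2}) x :
  dual_gp_set (@sierp_adj 3 n.+2) X -> (forall i, set_last x i \in X) -> False.
Proof.
move=> dX allX.
pose pen : 'I_n.+2 := inord n.
have pen_n : pen = n :> nat by rewrite inordK.
have penL : pen != ord_max by rewrite -(inj_eq val_inj) /= pen_n ltn_eqF.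
have above_pen (t : 'I_n.+2) : (pen < t)%N -> t = ord_max.
  by rewrite pen_n => nt; apply/val_inj/eqP; rewrite /= eqn_leq -ltnS ltn_ord.
have pen_lt : (pen < @ord_max n.+1)%N by rewrite pen_n.
set q := x pen.
(* The last letters m, r differ from the penultimate letter q, so the triangle
   vertices ending in m and in r both have a bridge edge at level pen. *)
have [m [mq _]] := ord_avoid2 q q isT.
have [r [rq rm]] := ord_avoid2 q m isT.
have bridge i : i != q ->
    sierp_adj (set_last x i) (bridge_nbr (set_last x i) pen) /\
    first_diff (set_last x i) (bridge_nbr (set_last x i) pen) pen.
  move=> iq; have ui : set_last x i pen != set_last x i ord_max.
    by rewrite set_last_max set_last_other // eq_sym.
  split; last exact: first_diff_bridge_nbr.
  by apply: sierp_adj_bridge_nbr => // t /above_pen ->.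
have out i j : i != q -> j != i -> bridge_nbr (set_last x i) pen \notin X.
  move=> iq ji; have [ud dud] := bridge i iq.
  have := dual_gp_bridge_split dX (allX i) ud dud penL (i := j).
  by rewrite set_lastK allX set_last_max => /(_ ji); case: (_ \in X).
set u1 := set_last x m; set u2 := set_last x r.
have [u1d1 _] := bridge m mq; have [u2d2 _] := bridge r rq.
have u1u2 : sierp_adj u1 u2.
  by rewrite /u2 -(set_lastK x m r) sierp_adj_set_last // set_last_max.
have bridge_val i (t : 'I_n.+2) :
    (t < pen)%N -> bridge_nbr (set_last x i) pen t = x t.
  by move=> tp; rewrite bridge_nbr_below // set_last_other // (ltn_neq_ord_max tp).
have bridge_max i : bridge_nbr (set_last x i) pen ord_max = q.
  by rewrite bridge_nbr_max // set_last_other.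
have far : dist_ge3 (@sierp_adj 3 n.+2) (bridge_nbr u1 pen) (bridge_nbr u2 pen).
  apply: (sierp_dist_ge3 _ pen_lt _ pen_lt).
  - split=> [|t tp]; last by rewrite !bridge_val.
    by rewrite !bridge_nbr_at !set_last_max eq_sym.
  - by rewrite bridge_max bridge_nbr_at set_last_max eq_sym.
  - by rewrite bridge_max bridge_nbr_at set_last_max eq_sym.
have d1X := out m r mq rm.
have d2X : bridge_nbr u2 pen \notin X by apply: (out r m rq); rewrite eq_sym.
have d1u1 : sierp_adj (bridge_nbr u1 pen) u1 by rewrite sierp_adj_sym.
have := dual_gp_geodesic3 (@sierp_adj_irr 3 n.+2) dX (allX m) d1u1 u1u2 u2d2 far.
by rewrite (negbTE d1X) (negbTE d2X).
Qed.

Lemma dual_gp_sub_extreme n (X : {set sierp_vertex 3 n.+1}) :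
  dual_gp_set (@sierp_adj 3 n.+1) X -> X \subset extreme_vertices 3 n.
Proof.
case: n => [|n] in X *; move=> dX; apply/subsetP => x xX.
  by rewrite inE; apply/forallP => t; rewrite !ord1.
apply: contraT => /nonextreme_last_change[h [xh above]].
have hL : h != ord_max by apply: contraNneq xh => ->.
have xc := sierp_adj_bridge_nbr xh above; have dxc := first_diff_bridge_nbr xh.
have [cX|cX] := boolP (bridge_nbr x h \in X).
  by case: (dual_gp_no_bridge_edge dX xX cX xc dxc hL).
have allX i : set_last x i \in X.
  have [->|ix] := eqVneq i (x ord_max); first by rewrite set_last_id.
  have := dual_gp_bridge_split dX xX xc dxc hL ix.
  by rewrite (negbTE cX); case: (_ \in X).
by case: (dual_gp_no_full_triangle dX allX).
Qed.

Theorem corollary4p2 (n : nat) : (1 <= n)%N ->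
  gp_t (@sierp_adj 3 n) = 3 /\ gp_d (@sierp_adj 3 n) = 3 /\
  num_gp_t (@sierp_adj 3 n) = 1 /\ num_gp_d (@sierp_adj 3 n) = 1.
Proof.
case: n => [//|n] _.
have ext_t := @extreme_total_gp 3 n.
have sub_ext := @dual_gp_sub_extreme n.
have [gpt numt] := greatest_set_max_card ext_t (fun X tX => sub_ext X (total_gp_dual tX)).
have [gpd numd] := greatest_set_max_card (total_gp_dual ext_t) sub_ext.
rewrite card_extreme in gpt gpd.
by rewrite /num_gp_t /num_gp_d /gp_t /gp_d.
Qed.
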